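(* Consider Configuration II (two agents in mutual beacon-referenced pursuit of a single beacon at the origin, $b=0$) with parameters $\mu>0$, $\lambda\in(0,1)$, $a\in[-1,1]$ and $a_0=0$. A circling equilibrium exists if and only if $a<0$, and at a circling equilibrium the shape variables satisfy $$\bar x_1=\bar x_2=0,\quad \bar x_{1b1}=\bar x_{2b2}=0,\quad \tilde x=-1,\quad \rho=\frac{2}{(1-\lambda)\mu(-a)},\quad \rho_{1b1}=\rho_{2b2}.$$
   Context: Two-agent setup: beacons $\mathbf r_{b1}=(0,0,-b)$, $\mathbf r_{b2}=(0,0,b)$ with $b\ge0$, $\hat{\mathbf b}=\mathbf r_{b2}-\mathbf r_{b1}=(0,0,2b)$. Agents $i=1,2$ have positions $\mathbf r_i\in\mathbb R^3$ and unit velocities $\mathbf x_i$. Let $\mathbf r=\mathbf r_1-\mathbf r_2$, $\mathbf r_{1b1}=\mathbf r_1-\mathbf r_{b1}$, $\mathbf r_{2b2}=\mathbf r_2-\mathbf r_{b2}$, $\rho=|\mathbf r|$, $\rho_{1b1}=|\mathbf r_{1b1}|$, $\rho_{2b2}=|\mathbf r_{2b2}|$, $\bar x_1=\mathbf x_1\cdot\mathbf r/\rho$, $\bar x_2=-\mathbf x_2\cdot\mathbf r/\rho$, $\bar x_{1b1}=\mathbf x_1\cdot\mathbf r_{1b1}/\rho_{1b1}$, $\bar x_{2b2}=\mathbf x_2\cdot\mathbf r_{2b2}/\rho_{2b2}$, $\tilde x=\mathbf x_1\cdot\mathbf x_2$, $\hat r_i=\mathbf r_i\cdot\hat{\mathbf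 b}$, $\hat x_i=\mathbf x_i\cdot\hat{\mathbf b}$. With gain $\mu>0$, weight $\lambda\in(0,1)$, common agent-bearing parameter $a\in[-1,1]$ and common beacon-bearing parameter $a_0\in[-1,1]$, the closed-loop dynamics are $\dot{\mathbf r}_i=\mathbf x_i$ and $$\dot{\mathbf x}_1=-(1-\lambda)\mu(\bar x_1-a)\Bigl(\tfrac{\mathbf r}{\rho}-\bar x_1\mathbf x_1\Bigr)-\lambda\mu(\bar x_{1b1}-a_0)\Bigl(\tfrac{\mathbf r_{1b1}}{\rho_{1b1}}-\bar x_{1b1}\mathbf x_1\Bigr),$$ $$\dot{\mathbf x}_2=-(1-\lambda)\mu(\bar x_2-a)\Bigl(-\tfrac{\mathbf r}{\rho}-\bar x_2\mathbf x_2\Bigr)-\lambda\mu(\bar x_{2b2}-a_0)\Bigl(\tfrac{\mathbf r_{2b2}}{\rho_{2b2}}-\bar x_{2b2}\mathbf x_2\Bigr).$$ The shape variables $(\bar x_1,\bar x_2,\bar x_{1b1},\bar x_{2b2},\tilde x,\rho,\rho_{1b1},\rho_{2b2},\hat r_1,\hat r_2,\hat x_1,\hat x_2)$ have time derivatives along this flow that depend only on the shape variables. A circling equilibrium is a state with $\rho,\rho_{1b1},\rho_{2b2}>0$ at which the time derivatives of all shape variables vanish. Configuration II is the case $b=0$ (single beacon at the origin, so $\hat{\mathbf b}=\mathbf 0$ and $\hat r_i=\hat x_i=0$). *)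

From Stdlib Require Import Reals Lra.
Open Scope R_scope.

Record V3 := mkV3 { vx : R; vy : R; vz : R }.

Definition vadd (u v : V3) : V3 := mkV3 (vx u + vx v) (vy u + vy v) (vz u + vz v).
Definition vsub (u v : V3) : V3 := mkV3 (vx u - vx v) (vy u - vy v) (vz u - vz v).
Definition vscale (c : R) (v : V3) : V3 := mkV3 (c * vx v) (c * vy v) (c * vz v).
Definition vopp (v : V3) : V3 := vscale (-1) v.
Definition vdot (u v : V3) : R := vx u * vx v + vy u * vy v + vz u * vz v.
Definition vnorm (v : V3) : R := sqrt (vdot v v).

(* Full state of the two-agent system: positions r1 r2, unit velocities x1 x2 *)
Record State := mkState { r1 : V3; r2 : V3; x1 : V3; x2 : V3 }.

Definition st_add (s t : State) : State :=
  mkState (vadd (r1 s) (r1 t)) (vadd (r2 s) (r2 t)) (vadd (x1 s) (x1 t)) (vadd (x2 s) (x2 t)).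
Definition st_scale (c : R) (s : State) : State :=
  mkState (vscale c (r1 s)) (vscale c (r2 s)) (vscale c (x1 s)) (vscale c (x2 s)).

Section Model.
Variable b : R.

Definition rb1 : V3 := mkV3 0 0 (- b).
Definition rb2 : V3 := mkV3 0 0 b.
Definition bhat : V3 := vsub rb2 rb1.

Definition rrel (s : State) : V3 := vsub (r1 s) (r2 s).
Definition r1b1 (s : State) : V3 := vsub (r1 s) rb1.
Definition r2b2 (s : State) : V3 := vsub (r2 s) rb2.

Definition rho (s : State) : R := vnorm (rrel s).
Definition rho1b1 (s : State) : R := vnorm (r1b1 s).
Definition rho2b2 (s : State) : R := vnorm (r2b2 s).
Definition xbar1 (s : State) : R := vdot (x1 s) (rrel s) / rho s.
Definition xbar2 (s : State) : R := - vdot (x2 s) (rrel s) / rho s.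
Definition xbar1b1 (s : State) : R := vdot (x1 s) (r1b1 s) / rho1b1 s.
Definition xbar2b2 (s : State) : R := vdot (x2 s) (r2b2 s) / rho2b2 s.
Definition xtilde (s : State) : R := vdot (x1 s) (x2 s).
Definition rhat1 (s : State) : R := vdot (r1 s) bhat.
Definition rhat2 (s : State) : R := vdot (r2 s) bhat.
Definition xhat1 (s : State) : R := vdot (x1 s) bhat.
Definition xhat2 (s : State) : R := vdot (x2 s) bhat.

Definition shape_vars : list (State -> R) :=
  xbar1 :: xbar2 :: xbar1b1 :: xbar2b2 :: xtilde :: rho :: rho1b1 :: rho2b2
  :: rhat1 :: rhat2 :: xhat1 :: xhat2 :: nil.

Variables (mu lambda a a0 : R).

(* closed-loop vector field: (r1', r2', x1', x2') *)
Definition field (s : State) : State :=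
  mkState (x1 s) (x2 s)
    (vadd
      (vscale (- (1 - lambda) * mu * (xbar1 s - a))
         (vsub (vscale (/ rho s) (rrel s)) (vscale (xbar1 s) (x1 s))))
      (vscale (- lambda * mu * (xbar1b1 s - a0))
         (vsub (vscale (/ rho1b1 s) (r1b1 s)) (vscale (xbar1b1 s) (x1 s)))))
    (vadd
      (vscale (- (1 - lambda) * mu * (xbar2 s - a))
         (vsub (vscale (- / rho s) (rrel s)) (vscale (xbar2 s) (x2 s))))
      (vscale (- lambda * mu * (xbar2b2 s - a0))
         (vsub (vscale (/ rho2b2 s) (r2b2 s)) (vscale (xbar2b2 s) (x2 s))))).

(* the time derivative of the function f along the flow at state s is zero:
   d/dt f(s + t * field s) at t = 0 equals 0 (chain rule: this is the
   time derivative along any trajectory passing through s) *)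
Definition deriv_vanishes (f : State -> R) (s : State) : Prop :=
  derivable_pt_lim (fun t => f (st_add s (st_scale t (field s)))) 0 0.

Definition circling_equilibrium (s : State) : Prop :=
  vnorm (x1 s) = 1 /\ vnorm (x2 s) = 1 /\
  0 < rho s /\ 0 < rho1b1 s /\ 0 < rho2b2 s /\
  (forall f, List.In f shape_vars -> deriv_vanishes f s).

End Model.

(* At an equilibrium the distances rho, rho1b1, rho2b2 are stationary, and their
   rates are xbar1 + xbar2, xbar1b1 and xbar2b2.  With the beacon bearings zero the
   beacon terms drop out of the field, and the rate of xtilde becomes
   -2 (1-lambda) mu xbar1^2 (1 - xtilde); equal unit velocities would be orthogonal
   to both positions, so xbar1 = xbar2 = 0.  Each acceleration is then
   +-(1-lambda) mu a r / rho, and the rates of xbar1, xbar1b1, xbar2b2 read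
   1 - xtilde + k rho = 0 and 1 +- k (r . r_i) / rho = 0 with k = (1-lambda) mu a.
   Since r . r1 - r . r2 = rho^2 and r . r1 + r . r2 = rho1b1^2 - rho2b2^2, this gives
   k rho = -2 (so a < 0), xtilde = -1 and rho1b1 = rho2b2.  Conversely these relations
   make every rate vanish, and they are realised by two agents diametrically opposite
   on a circle about the beacon. *)

From Coquelicot Require Import Coquelicot.
From Stdlib Require Import Reals Lra Psatz.
Open Scope R_scope.

Lemma vdot_comm u w : vdot u w = vdot w u.
Proof. destruct u, w; unfold vdot; simpl; ring. Qed.

Lemma vdot_subl u v w : vdot (vsub u v) w = vdot u w - vdot v w.
Proof. destruct u, v, w; unfold vdot, vsub; simpl; ring. Qed.

Lemma vdot_subr u v w : vdot w (vsub u v) = vdot w u - vdot w v.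
Proof. destruct u, v, w; unfold vdot, vsub; simpl; ring. Qed.

Lemma vdot_scalel c u w : vdot (vscale c u) w = c * vdot u w.
Proof. destruct u, w; unfold vdot, vscale; simpl; ring. Qed.

Lemma vdot_scaler c u w : vdot w (vscale c u) = c * vdot w u.
Proof. destruct u, w; unfold vdot, vscale; simpl; ring. Qed.

Lemma vdot_self_ge0 u : 0 <= vdot u u.
Proof. destruct u; unfold vdot; simpl; nra. Qed.

Lemma vdot_self u : vdot u u = vnorm u * vnorm u.
Proof. unfold vnorm; rewrite sqrt_sqrt; auto using vdot_self_ge0. Qed.

Lemma vnorm_eq (u : V3) (n : R) : 0 <= n -> vdot u u = n * n -> vnorm u = n.
Proof. intros Hn Hu; unfold vnorm; rewrite Hu; apply sqrt_square, Hn. Qed.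

Lemma vadd_scale0 c u w : c = 0 -> vadd u (vscale c w) = u.
Proof. intros ->; destruct u, w; unfold vadd, vscale; simpl; f_equal; ring. Qed.

Lemma sum3_sqr_eq0 x y z : x * x + y * y + z * z = 0 -> x = 0 /\ y = 0 /\ z = 0.
Proof. intros; repeat split; nra. Qed.

Lemma unit_vectors_eq u w :
  vdot u u = 1 -> vdot w w = 1 -> vdot u w = 1 -> u = w.
Proof.
  destruct u as [ux uy uz], w as [wx wy wz]; unfold vdot; simpl; intros Hu Hw Huw.
  destruct (sum3_sqr_eq0 (ux - wx) (uy - wy) (uz - wz)) as (? & ? & ?); [nra|].
  f_equal; lra.
Qed.

Lemma vdot_sub_diff u w : vdot (vsub u w) u - vdot (vsub u w) w = vdot (vsub u w) (vsub u w).
Proof. destruct u, w; unfold vdot, vsub; simpl; ring. Qed.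

Lemma vdot_sub_sum u w : vdot (vsub u w) u + vdot (vsub u w) w = vdot u u - vdot w w.
Proof. destruct u, w; unfold vdot, vsub; simpl; ring. Qed.

Lemma vdot_bhat0 w : vdot w (bhat 0) = 0.
Proof. destruct w; unfold vdot, bhat, rb1, rb2, vsub; simpl; ring. Qed.

Lemma r1b1_0 s : r1b1 0 s = r1 s.
Proof. destruct s as [[] ? ? ?]; unfold r1b1, rb1, vsub; simpl; f_equal; ring. Qed.

Lemma r2b2_0 s : r2b2 0 s = r2 s.
Proof. destruct s as [? [] ? ?]; unfold r2b2, rb2, vsub; simpl; f_equal; ring. Qed.

Lemma rho1b1_0 s : rho1b1 0 s = vnorm (r1 s).
Proof. unfold rho1b1; rewrite r1b1_0; reflexivity. Qed.

Lemma rho2b2_0 s : rho2b2 0 s = vnorm (r2 s).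
Proof. unfold rho2b2; rewrite r2b2_0; reflexivity. Qed.

Definition line (s d : State) (t : R) : State := st_add s (st_scale t d).

Lemma line_0 s d : line s d 0 = s.
Proof.
  destruct s as [[] [] [] []], d as [[] [] [] []];
  unfold line, st_add, st_scale, vadd, vscale; simpl; f_equal; f_equal; ring.
Qed.

Lemma rrel_line s d t : rrel (line s d t) = vadd (rrel s) (vscale t (rrel d)).
Proof.
  destruct s as [[] [] ? ?], d as [[] [] ? ?];
  unfold line, rrel, st_add, st_scale, vadd, vsub, vscale; simpl; f_equal; ring.
Qed.

Lemma r1b1_line b s d t : r1b1 b (line s d t) = vadd (r1b1 b s) (vscale t (r1 d)).
Proof.
  destruct s as [[] ? ? ?], d as [[] ? ? ?];
  unfold line, r1b1, st_add, st_scale, vadd, vsub, vscale; simpl; f_equal; ring.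
Qed.

Lemma r2b2_line b s d t : r2b2 b (line s d t) = vadd (r2b2 b s) (vscale t (r2 d)).
Proof.
  destruct s as [? [] ? ?], d as [? [] ? ?];
  unfold line, r2b2, st_add, st_scale, vadd, vsub, vscale; simpl; f_equal; ring.
Qed.

Lemma is_derive_val (f : R -> R) (x l l' : R) : is_derive f x l -> l = l' -> is_derive f x l'.
Proof. intros H <-; exact H. Qed.

Lemma is_derive_ratio (f g : R -> R) (f' g' : R) :
  is_derive f 0 f' -> is_derive g 0 g' -> 0 < g 0 ->
  is_derive (fun t => f t / g t) 0 ((f' - f 0 / g 0 * g') / g 0).
Proof.
  intros Hf Hg Hg0; eapply is_derive_val; [apply is_derive_div; [exact Hf | exact Hg | apply Rgt_not_eq, Hg0]|].
  field; apply Rgt_not_eq, Hg0.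
Qed.

Lemma is_derive_vdot_line u v w z :
  is_derive (fun t => vdot (vadd u (vscale t v)) (vadd w (vscale t z))) 0
    (vdot v w + vdot u z).
Proof. destruct u, v, w, z; unfold vdot, vadd, vscale; simpl; auto_derive; [easy | ring]. Qed.

Lemma is_derive_vnorm_line u v :
  0 < vnorm u -> is_derive (fun t => vnorm (vadd u (vscale t v))) 0 (vdot u v / vnorm u).
Proof.
  destruct u as [ux uy uz], v; unfold vnorm, vdot, vadd, vscale; simpl; intros Hu.
  auto_derive; rewrite !Rmult_0_l, !Rplus_0_r.
  - destruct (Rle_lt_dec (ux * ux + uy * uy + uz * uz) 0) as [Hle|]; auto.
    rewrite sqrt_neg_0 in Hu; lra.
  - field; lra.
Qed.

Lemma is_derive_rho_line s d : 0 < rho s ->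
  is_derive (fun t => rho (line s d t)) 0 (vdot (rrel s) (rrel d) / rho s).
Proof.
  intros Hr; eapply is_derive_ext; [intro t; unfold rho; rewrite rrel_line; reflexivity|].
  apply is_derive_vnorm_line, Hr.
Qed.

Lemma is_derive_rho1b1_line b s d : 0 < rho1b1 b s ->
  is_derive (fun t => rho1b1 b (line s d t)) 0 (vdot (r1b1 b s) (r1 d) / rho1b1 b s).
Proof.
  intros Hr; eapply is_derive_ext; [intro t; unfold rho1b1; rewrite r1b1_line; reflexivity|].
  apply is_derive_vnorm_line, Hr.
Qed.

Lemma is_derive_rho2b2_line b s d : 0 < rho2b2 b s ->
  is_derive (fun t => rho2b2 b (line s d t)) 0 (vdot (r2b2 b s) (r2 d) / rho2b2 b s).
Proof.
  intros Hr; eapply is_derive_ext; [intro t; unfold rho2b2; rewrite r2b2_line; reflexivity|].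
  apply is_derive_vnorm_line, Hr.
Qed.

Lemma is_derive_xbar1_line s d : 0 < rho s ->
  is_derive (fun t => xbar1 (line s d t)) 0
    ((vdot (x1 d) (rrel s) + vdot (x1 s) (rrel d)
      - xbar1 s * (vdot (rrel s) (rrel d) / rho s)) / rho s).
Proof.
  intros Hr; unfold xbar1.
  eapply is_derive_val.
  - apply (is_derive_ratio (fun t => vdot (x1 (line s d t)) (rrel (line s d t)))
             (fun t => rho (line s d t))).
    + eapply is_derive_ext; [intro t; rewrite rrel_line; reflexivity|].
      apply is_derive_vdot_line.
    + apply is_derive_rho_line, Hr.
    + rewrite line_0; exact Hr.
  - rewrite line_0; reflexivity.
Qed.

Lemma is_derive_xbar2_line s d : 0 < rho s ->
  is_derive (fun t => xbar2 (line s d t)) 0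
    ((- (vdot (x2 d) (rrel s) + vdot (x2 s) (rrel d))
      - xbar2 s * (vdot (rrel s) (rrel d) / rho s)) / rho s).
Proof.
  intros Hr; unfold xbar2.
  eapply is_derive_val.
  - apply (is_derive_ratio (fun t => - vdot (x2 (line s d t)) (rrel (line s d t)))
             (fun t => rho (line s d t))).
    + apply (is_derive_opp (fun t => vdot (x2 (line s d t)) (rrel (line s d t)))).
      eapply is_derive_ext; [intro t; rewrite rrel_line; reflexivity|].
      apply is_derive_vdot_line.
    + apply is_derive_rho_line, Hr.
    + rewrite line_0; exact Hr.
  - rewrite line_0; reflexivity.
Qed.

Lemma is_derive_xbar1b1_line b s d : 0 < rho1b1 b s ->
  is_derive (fun t => xbar1b1 b (line s d t)) 0
    ((vdot (x1 d) (r1b1 b s) + vdot (x1 s) (r1 d)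
      - xbar1b1 b s * (vdot (r1b1 b s) (r1 d) / rho1b1 b s)) / rho1b1 b s).
Proof.
  intros Hr; unfold xbar1b1.
  eapply is_derive_val.
  - apply (is_derive_ratio (fun t => vdot (x1 (line s d t)) (r1b1 b (line s d t)))
             (fun t => rho1b1 b (line s d t))).
    + eapply is_derive_ext; [intro t; rewrite r1b1_line; reflexivity|].
      apply is_derive_vdot_line.
    + apply is_derive_rho1b1_line, Hr.
    + rewrite line_0; exact Hr.
  - rewrite line_0; reflexivity.
Qed.

Lemma is_derive_xbar2b2_line b s d : 0 < rho2b2 b s ->
  is_derive (fun t => xbar2b2 b (line s d t)) 0
    ((vdot (x2 d) (r2b2 b s) + vdot (x2 s) (r2 d)
      - xbar2b2 b s * (vdot (r2b2 b s) (r2 d) / rho2b2 b s)) / rho2b2 b s).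
Proof.
  intros Hr; unfold xbar2b2.
  eapply is_derive_val.
  - apply (is_derive_ratio (fun t => vdot (x2 (line s d t)) (r2b2 b (line s d t)))
             (fun t => rho2b2 b (line s d t))).
    + eapply is_derive_ext; [intro t; rewrite r2b2_line; reflexivity|].
      apply is_derive_vdot_line.
    + apply is_derive_rho2b2_line, Hr.
    + rewrite line_0; exact Hr.
  - rewrite line_0; reflexivity.
Qed.

Lemma is_derive_xtilde_line s d :
  is_derive (fun t => xtilde (line s d t)) 0 (vdot (x1 d) (x2 s) + vdot (x1 s) (x2 d)).
Proof. apply is_derive_vdot_line. Qed.

Lemma deriv_vanishes_iff b mu lambda a a0 (f : State -> R) s (D : R) :
  is_derive (fun t => f (line s (field b mu lambda a a0 s) t)) 0 D ->
  (deriv_vanishes b mu lambda a a0 f s <-> D = 0).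
Proof.
  intros HD; unfold deriv_vanishes, line in *; rewrite <- is_derive_Reals; split.
  - intros H0; apply is_derive_unique in H0, HD; rewrite <- HD; exact H0.
  - intros ->; exact HD.
Qed.

Lemma deriv_vanishes_axial_vars mu lambda a a0 s :
  forall f, List.In f (rhat1 0 :: rhat2 0 :: xhat1 0 :: xhat2 0 :: nil) ->
  deriv_vanishes 0 mu lambda a a0 f s.
Proof.
  intros f Hf; simpl in Hf.
  assert (Hzero : forall t, 0 = f (line s (field 0 mu lambda a a0 s) t)).
  { intro t; repeat destruct Hf as [<- | Hf]; try contradiction; apply eq_sym, vdot_bhat0. }
  apply (deriv_vanishes_iff _ _ _ _ _ _ _ 0); [|reflexivity].
  eapply is_derive_ext; [exact Hzero | apply (is_derive_const 0)].
Qed.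

Lemma div_eq0 x y : x / y = 0 -> 0 < y -> x = 0.
Proof.
  intros H Hy; replace x with (x / y * y) by (field; lra); rewrite H; ring.
Qed.

Lemma circling_relations (K a rh X p q : R) : 0 < K -> 0 < rh ->
  1 - X + K * a * rh = 0 -> 1 + K * a * p / rh = 0 -> 1 - K * a * q / rh = 0 ->
  p - q = rh * rh ->
  a < 0 /\ X = -1 /\ rh = 2 / (K * - a) /\ p + q = 0.
Proof.
  intros HK Hrh HX Hp Hq Hpq.
  assert (Hrad : K * a * rh = -2).
  { replace (K * a * rh) with (K * a * p / rh - K * a * q / rh)
      by (rewrite <- Rdiv_minus_distr, <- Rmult_minus_distr_l, Hpq; field; lra).
    lra. }
  assert (Ha : a < 0) by (assert (0 < K * rh) by nra; nra).
  repeat split; [exact Ha | lra | |].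
  - replace 2 with (- (K * a * rh)) by lra; field; split; lra.
  - assert (Hsum : K * a * (p + q) = 0).
    { replace (K * a * (p + q)) with ((K * a * p / rh + K * a * q / rh) * rh)
        by (field; lra).
      replace (K * a * p / rh + K * a * q / rh) with 0 by lra; ring. }
    apply Rmult_integral in Hsum as [Hsum | Hsum]; [nra | exact Hsum].
Qed.

Section Equilibrium.

Variables (mu lambda a : R) (s : State).
Hypothesis HK : 0 < (1 - lambda) * mu.
Hypotheses (Hrho : 0 < rho s) (Hrho1 : 0 < rho1b1 0 s) (Hrho2 : 0 < rho2b2 0 s).
Hypotheses (Hx1 : vnorm (x1 s) = 1) (Hx2 : vnorm (x2 s) = 1).

Local Notation v := (field 0 mu lambda a 0 s).

Lemma dot_x1_rrel : vdot (x1 s) (rrel s) = xbar1 s * rho s.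
Proof. unfold xbar1; field; lra. Qed.

Lemma dot_x2_rrel : vdot (x2 s) (rrel s) = - xbar2 s * rho s.
Proof. unfold xbar2; field; lra. Qed.

Lemma dot_x1_r1 : vdot (x1 s) (r1 s) = xbar1b1 0 s * rho1b1 0 s.
Proof. unfold xbar1b1; rewrite r1b1_0; field; lra. Qed.

Lemma dot_x2_r2 : vdot (x2 s) (r2 s) = xbar2b2 0 s * rho2b2 0 s.
Proof. unfold xbar2b2; rewrite r2b2_0; field; lra. Qed.

Lemma dot_x1_x1 : vdot (x1 s) (x1 s) = 1.
Proof. rewrite vdot_self, Hx1; ring. Qed.

Lemma dot_x2_x2 : vdot (x2 s) (x2 s) = 1.
Proof. rewrite vdot_self, Hx2; ring. Qed.

Lemma dot_rrel_rrel : vdot (rrel s) (rrel s) = rho s * rho s.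
Proof. apply vdot_self. Qed.

Lemma rho_rate : is_derive (fun t => rho (line s v t)) 0 (xbar1 s + xbar2 s).
Proof.
  eapply is_derive_val; [apply is_derive_rho_line, Hrho|].
  change (rrel v) with (vsub (x1 s) (x2 s)).
  rewrite vdot_subr, !(vdot_comm (rrel s)), dot_x1_rrel, dot_x2_rrel; field; lra.
Qed.

Lemma rho1b1_rate : is_derive (fun t => rho1b1 0 (line s v t)) 0 (xbar1b1 0 s).
Proof.
  eapply is_derive_val; [apply is_derive_rho1b1_line, Hrho1|].
  change (r1 v) with (x1 s).
  rewrite r1b1_0, vdot_comm, dot_x1_r1; field; lra.
Qed.

Lemma rho2b2_rate : is_derive (fun t => rho2b2 0 (line s v t)) 0 (xbar2b2 0 s).
Proof.
  eapply is_derive_val; [apply is_derive_rho2b2_line, Hrho2|].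
  change (r2 v) with (x2 s).
  rewrite r2b2_0, vdot_comm, dot_x2_r2; field; lra.
Qed.

Lemma field_x1_beacon_free : xbar1b1 0 s = 0 ->
  x1 v = vscale (- (1 - lambda) * mu * (xbar1 s - a))
           (vsub (vscale (/ rho s) (rrel s)) (vscale (xbar1 s) (x1 s))).
Proof. intros Hc1; unfold field; cbn [x1]; rewrite Hc1; apply vadd_scale0; ring. Qed.

Lemma field_x2_beacon_free : xbar2b2 0 s = 0 ->
  x2 v = vscale (- (1 - lambda) * mu * (xbar2 s - a))
           (vsub (vscale (- / rho s) (rrel s)) (vscale (xbar2 s) (x2 s))).
Proof. intros Hc3; unfold field; cbn [x2]; rewrite Hc3; apply vadd_scale0; ring. Qed.

Lemma xtilde_rate : xbar1b1 0 s = 0 -> xbar2b2 0 s = 0 -> xbar2 s = - xbar1 s ->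
  is_derive (fun t => xtilde (line s v t)) 0
    (- 2 * ((1 - lambda) * mu) * xbar1 s ^ 2 * (1 - xtilde s)).
Proof.
  intros Hc1 Hc3 Hc2.
  eapply is_derive_val; [apply is_derive_xtilde_line|].
  rewrite field_x1_beacon_free, field_x2_beacon_free by assumption.
  rewrite vdot_scalel, vdot_scaler, vdot_subl, vdot_subr, !vdot_scalel, !vdot_scaler.
  rewrite (vdot_comm (rrel s) (x2 s)), dot_x1_rrel, dot_x2_rrel, Hc2.
  unfold xtilde; field; lra.
Qed.

Section Aligned.

Hypotheses (Hc : xbar1 s = 0) (Hc2 : xbar2 s = 0)
  (Hc1 : xbar1b1 0 s = 0) (Hc3 : xbar2b2 0 s = 0).

Lemma dot_field_x1 w : vdot (x1 v) w = (1 - lambda) * mu * a * vdot (rrel s) w / rho s.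
Proof.
  rewrite field_x1_beacon_free, vdot_scalel, vdot_subl, !vdot_scalel, Hc by exact Hc1.
  field; lra.
Qed.

Lemma dot_field_x2 w : vdot (x2 v) w = - ((1 - lambda) * mu * a * vdot (rrel s) w / rho s).
Proof.
  rewrite field_x2_beacon_free, vdot_scalel, vdot_subl, !vdot_scalel, Hc2 by exact Hc3.
  field; lra.
Qed.

Lemma xbar1_rate : is_derive (fun t => xbar1 (line s v t)) 0
  ((1 - xtilde s + (1 - lambda) * mu * a * rho s) / rho s).
Proof.
  eapply is_derive_val; [apply is_derive_xbar1_line, Hrho|].
  change (rrel v) with (vsub (x1 s) (x2 s)).
  rewrite dot_field_x1, vdot_subr, dot_x1_x1, dot_rrel_rrel, Hc.
  unfold xtilde; field; lra.
Qed.

Lemma xbar2_rate : is_derive (fun t => xbar2 (line s v t)) 0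
  ((1 - xtilde s + (1 - lambda) * mu * a * rho s) / rho s).
Proof.
  eapply is_derive_val; [apply is_derive_xbar2_line, Hrho|].
  change (rrel v) with (vsub (x1 s) (x2 s)).
  rewrite dot_field_x2, vdot_subr, dot_x2_x2, dot_rrel_rrel, Hc2.
  unfold xtilde; rewrite (vdot_comm (x2 s)); field; lra.
Qed.

Lemma xbar1b1_rate : is_derive (fun t => xbar1b1 0 (line s v t)) 0
  ((1 + (1 - lambda) * mu * a * vdot (rrel s) (r1 s) / rho s) / rho1b1 0 s).
Proof.
  eapply is_derive_val; [apply is_derive_xbar1b1_line, Hrho1|].
  change (r1 v) with (x1 s).
  rewrite r1b1_0, dot_field_x1, dot_x1_x1, Hc1; field; lra.
Qed.

Lemma xbar2b2_rate : is_derive (fun t => xbar2b2 0 (line s v t)) 0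
  ((1 - (1 - lambda) * mu * a * vdot (rrel s) (r2 s) / rho s) / rho2b2 0 s).
Proof.
  eapply is_derive_val; [apply is_derive_xbar2b2_line, Hrho2|].
  change (r2 v) with (x2 s).
  rewrite r2b2_0, dot_field_x2, dot_x2_x2, Hc3; field; lra.
Qed.

End Aligned.

Lemma shape_of_vanishing_rates :
  (forall f, List.In f (shape_vars 0) -> deriv_vanishes 0 mu lambda a 0 f s) ->
  a < 0 /\ xbar1 s = 0 /\ xbar2 s = 0 /\ xbar1b1 0 s = 0 /\ xbar2b2 0 s = 0 /\
  xtilde s = -1 /\ rho s = 2 / ((1 - lambda) * mu * (- a)) /\ rho1b1 0 s = rho2b2 0 s.
Proof.
  intros Hall.
  assert (vanish : forall f (D : R), is_derive (fun t => f (line s v t)) 0 D ->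
            List.In f (shape_vars 0) -> D = 0).
  { intros f D HD Hf; apply (deriv_vanishes_iff _ _ _ _ _ _ _ _ HD), Hall, Hf. }
  assert (Hc12 := vanish _ _ rho_rate ltac:(simpl; tauto)).
  assert (Hc1 := vanish _ _ rho1b1_rate ltac:(simpl; tauto)).
  assert (Hc3 := vanish _ _ rho2b2_rate ltac:(simpl; tauto)).
  assert (Hc2 : xbar2 s = - xbar1 s) by lra.
  assert (Hc : xbar1 s = 0).
  { assert (HX := vanish _ _ (xtilde_rate Hc1 Hc3 Hc2) ltac:(simpl; tauto)).
    apply Rmult_integral in HX as [HX | Hsq]; [apply Rmult_integral in HX as [|]; nra|].
    (* equal velocities are orthogonal to r1 and to r2, hence to r1 - r2 *)
    assert (Hx12 : x1 s = x2 s) by (apply unit_vectors_eq; auto using dot_x1_x1, dot_x2_x2; unfold xtilde in Hsq; lra).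
    assert (Hr : vdot (x1 s) (rrel s) = 0).
    { unfold rrel; rewrite vdot_subr, dot_x1_r1, Hx12, dot_x2_r2, Hc1, Hc3; ring. }
    rewrite dot_x1_rrel in Hr; nra. }
  rewrite Hc, Ropp_0 in Hc2; clear Hc12.
  assert (H1 := div_eq0 _ _ (vanish _ _ (xbar1_rate Hc Hc1) ltac:(simpl; tauto)) Hrho).
  assert (Hp := div_eq0 _ _ (vanish _ _ (xbar1b1_rate Hc Hc1) ltac:(simpl; tauto)) Hrho1).
  assert (Hq := div_eq0 _ _ (vanish _ _ (xbar2b2_rate Hc2 Hc3) ltac:(simpl; tauto)) Hrho2).
  assert (Hpq := vdot_sub_diff (r1 s) (r2 s)); fold (rrel s) in Hpq.
  rewrite dot_rrel_rrel in Hpq.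
  destruct (circling_relations _ _ _ _ _ _ HK Hrho H1 Hp Hq Hpq) as (Ha & HX & Hrad & Hsum).
  repeat split; auto.
  assert (Hsq := vdot_sub_sum (r1 s) (r2 s)); fold (rrel s) in Hsq.
  rewrite Hsum, !vdot_self, <- rho1b1_0, <- rho2b2_0 in Hsq.
  nra.
Qed.
Lemma vanishing_rates_of_shape :
  a < 0 -> xbar1 s = 0 -> xbar2 s = 0 -> xbar1b1 0 s = 0 -> xbar2b2 0 s = 0 ->
  xtilde s = -1 -> rho s = 2 / ((1 - lambda) * mu * (- a)) -> rho1b1 0 s = rho2b2 0 s ->
  forall f, List.In f (shape_vars 0) -> deriv_vanishes 0 mu lambda a 0 f s.
Proof.
  intros Ha Hc Hc2 Hc1 Hc3 HX Hrad H12 f Hf.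
  assert (Hk : (1 - lambda) * mu * a = -2 / rho s) by (rewrite Hrad; field; nra).
  assert (Hpq := vdot_sub_diff (r1 s) (r2 s)); fold (rrel s) in Hpq.
  assert (Hsum := vdot_sub_sum (r1 s) (r2 s)); fold (rrel s) in Hsum.
  rewrite !vdot_self, <- rho1b1_0, <- rho2b2_0, H12 in Hsum.
  rewrite dot_rrel_rrel in Hpq.
  assert (Hp : vdot (rrel s) (r1 s) = rho s * rho s / 2) by lra.
  assert (Hq : vdot (rrel s) (r2 s) = - (rho s * rho s / 2)) by lra.
  simpl in Hf; repeat destruct Hf as [<- | Hf]; try contradiction.
  - apply (deriv_vanishes_iff _ _ _ _ _ _ _ _ (xbar1_rate Hc Hc1)).
    rewrite Hk, HX; field; lra.
  - apply (deriv_vanishes_iff _ _ _ _ _ _ _ _ (xbar2_rate Hc2 Hc3)).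
    rewrite Hk, HX; field; lra.
  - apply (deriv_vanishes_iff _ _ _ _ _ _ _ _ (xbar1b1_rate Hc Hc1)).
    rewrite Hk, Hp; field; lra.
  - apply (deriv_vanishes_iff _ _ _ _ _ _ _ _ (xbar2b2_rate Hc2 Hc3)).
    rewrite Hk, Hq; field; lra.
  - apply (deriv_vanishes_iff _ _ _ _ _ _ _ _ (xtilde_rate Hc1 Hc3 ltac:(lra))).
    rewrite Hc; ring.
  - apply (deriv_vanishes_iff _ _ _ _ _ _ _ _ rho_rate); lra.
  - apply (deriv_vanishes_iff _ _ _ _ _ _ _ _ rho1b1_rate); exact Hc1.
  - apply (deriv_vanishes_iff _ _ _ _ _ _ _ _ rho2b2_rate); exact Hc3.
  - all: apply deriv_vanishes_axial_vars; simpl; tauto.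
Qed.

End Equilibrium.

Lemma circling_equilibrium_shape mu lambda a s : 0 < (1 - lambda) * mu ->
  circling_equilibrium 0 mu lambda a 0 s ->
  a < 0 /\ xbar1 s = 0 /\ xbar2 s = 0 /\ xbar1b1 0 s = 0 /\ xbar2b2 0 s = 0 /\
  xtilde s = -1 /\ rho s = 2 / ((1 - lambda) * mu * (- a)) /\ rho1b1 0 s = rho2b2 0 s.
Proof.
  intros HK (Hx1 & Hx2 & Hr & Hr1 & Hr2 & Hall).
  exact (shape_of_vanishing_rates mu lambda a s HK Hr Hr1 Hr2 Hx1 Hx2 Hall).
Qed.

(* The agents sit diametrically opposite on a circle of radius rho/2 about the beacon,
   moving tangentially in opposite directions. *)
Lemma circling_equilibrium_exists mu lambda a : 0 < (1 - lambda) * mu -> a < 0 ->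
  exists s, circling_equilibrium 0 mu lambda a 0 s.
Proof.
  intros HK Ha.
  set (d := 2 / ((1 - lambda) * mu * (- a))).
  assert (Hd : 0 < d) by (apply Rdiv_lt_0_compat; nra).
  set (s := mkState (mkV3 (d / 2) 0 0) (mkV3 (- (d / 2)) 0 0) (mkV3 0 1 0) (mkV3 0 (-1) 0)).
  assert (Hx1 : vnorm (x1 s) = 1) by (apply vnorm_eq; [lra | unfold vdot; simpl; ring]).
  assert (Hx2 : vnorm (x2 s) = 1) by (apply vnorm_eq; [lra | unfold vdot; simpl; ring]).
  assert (Hr : rho s = d) by (apply vnorm_eq; [lra | unfold vdot, rrel, vsub; simpl; field]).
  assert (Hr1 : rho1b1 0 s = d / 2) by (rewrite rho1b1_0; apply vnorm_eq; [lra | unfold vdot; simpl; field]).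
  assert (Hr2 : rho2b2 0 s = d / 2) by (rewrite rho2b2_0; apply vnorm_eq; [lra | unfold vdot; simpl; field]).
  exists s; repeat split; try assumption; try lra.
  apply vanishing_rates_of_shape; try assumption; try lra.
  - unfold xbar1; rewrite Hr; unfold vdot, rrel, vsub; simpl; field; lra.
  - unfold xbar2; rewrite Hr; unfold vdot, rrel, vsub; simpl; field; lra.
  - unfold xbar1b1; rewrite Hr1, r1b1_0; unfold vdot; simpl; field; lra.
  - unfold xbar2b2; rewrite Hr2, r2b2_0; unfold vdot; simpl; field; lra.
  - unfold xtilde, vdot; simpl; ring.
Qed.

Theorem proposition4p1 (mu lambda a : R)
  (Hmu : 0 < mu) (Hl0 : 0 < lambda) (Hl1 : lambda < 1)
  (Ha0 : -1 <= a) (Ha1 : a <= 1) :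
  ((exists s : State, circling_equilibrium 0 mu lambda a 0 s) <-> a < 0) /\
  (forall s : State, circling_equilibrium 0 mu lambda a 0 s ->
     xbar1 s = 0 /\ xbar2 s = 0 /\
     xbar1b1 0 s = 0 /\ xbar2b2 0 s = 0 /\
     xtilde s = -1 /\
     rho s = 2 / ((1 - lambda) * mu * (- a)) /\
     rho1b1 0 s = rho2b2 0 s).
Proof.
  assert (HK : 0 < (1 - lambda) * mu) by nra.
  split; [split|].
  - intros [s Hs]; apply (circling_equilibrium_shape _ _ _ s HK Hs).
  - apply circling_equilibrium_exists, HK.
  - intros s Hs; apply (circling_equilibrium_shape _ _ _ s HK Hs).
Qed.
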